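(* Let $R$ be a commutative Artinian ring, $M$ a non-zero $R$-module, and $N\leq M$ an $H$-PS-hollow submodule such that $In(N)\leq L$ whenever $L$ is a submodule with $N\leq L\leq M$. Then $In(N)$ is $H$-PS-hollow.
   Context: An $R$-submodule $N\leq M$ is PS-hollow iff for every ideal $I\leq R$ and every submodule $L\leq M$: $N\subseteq IM+L$ implies $N\subseteq IM$ or $N\subseteq L$. For a PS-hollow $N\leq M$ put $A_N=\{I\leq R: N\subseteq IM\}$, $H_N$ the set of minimal elements of $A_N$, and $In(N)=\bigcap_{I\in H_N} IM$ ($=M$ if $H_N=\emptyset$). For a set $H$ of ideals, $N$ is $H$-PS-hollow iff $N$ is PS-hollow and $H_N=H$. *)

From HB Require Import structures.
From mathcomp Require Import all_boot all_algebra.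
Set Implicit Arguments.
Unset Strict Implicit.
Unset Printing Implicit Defensive.
Import GRing.Theory.
Local Open Scope ring_scope.

Section PSHollow.
Variables (R : comNzRingType) (M : lmodType R).

Definition incl {T : Type} (A B : T -> Prop) : Prop := forall x, A x -> B x.

Definition is_ideal (I : R -> Prop) : Prop :=
  [/\ I 0, (forall a b, I a -> I b -> I (a + b)) & (forall r a, I a -> I (r * a))].

Definition artinian_ring : Prop :=
  forall f : nat -> (R -> Prop),
    (forall n, is_ideal (f n)) ->
    (forall n, incl (f n.+1) (f n)) ->
    exists n, forall m, (n <= m)%N -> incl (f n) (f m).

Definition is_submodule (N : M -> Prop) : Prop :=
  [/\ N 0, (forall x y, N x -> N y -> N (x + y)) & (forall (r : R) x, N x -> N (r *: x))].

Definition IM (I : R -> Prop) : M -> Prop :=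
  fun x => forall S, is_submodule S -> (forall a m, I a -> S (a *: m)) -> S x.

Definition subm_sum (A B : M -> Prop) : M -> Prop :=
  fun x => exists a b, A a /\ B b /\ x = a + b.

Definition PS_hollow (N : M -> Prop) : Prop :=
  is_submodule N /\
  forall (I : R -> Prop) (L : M -> Prop), is_ideal I -> is_submodule L ->
    incl N (subm_sum (IM I) L) -> incl N (IM I) \/ incl N L.

Definition A_N (N : M -> Prop) (I : R -> Prop) : Prop :=
  is_ideal I /\ incl N (IM I).

Definition H_N (N : M -> Prop) (I : R -> Prop) : Prop :=
  A_N N I /\ forall J, A_N N J -> incl J I -> incl I J.

(* In(N) = intersection of IM over I in H_N (= M when H_N is empty) *)
Definition In_ (N : M -> Prop) : M -> Prop :=
  fun x => forall I, H_N N I -> IM I x.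

Definition H_PS_hollow (H : (R -> Prop) -> Prop) (N : M -> Prop) : Prop :=
  PS_hollow N /\ forall I, H_N N I <-> H I.

End PSHollow.

From HB Require Import structures.
From mathcomp Require Import all_boot all_algebra.
Set Implicit Arguments.
Unset Strict Implicit.
Local Open Scope ring_scope.

(* Taking L := N in the hypothesis gives In(N) <= N, and N <= IM for every
   I in H_N gives N <= In(N); so In(N) = N, and being H-PS-hollow depends only
   on the underlying set. *)

Section SetInvariance.
Variables (R : comNzRingType) (M : lmodType R).

Lemma A_N_anti (A B : M -> Prop) (J : R -> Prop) :
  incl B A -> A_N A J -> A_N B J.
Proof. by move=> BA [idJ AJ]; split=> // x /BA; apply: AJ. Qed.

Variables (A B : M -> Prop).
Hypotheses (AB : incl A B) (BA : incl B A).

Lemma H_N_ext (I : R -> Prop) : H_N A I -> H_N B I.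
Proof.
move=> [AI minI]; split; first exact: A_N_anti AI.
by move=> J /(A_N_anti AB); apply: minI.
Qed.

Lemma is_submodule_ext : is_submodule A -> is_submodule B.
Proof.
case=> A0 AD AZ; split; first exact: AB.
- by move=> x y /BA Ax /BA Ay; apply/AB/AD.
- by move=> r x /BA Ax; apply/AB/AZ.
Qed.

Lemma PS_hollow_ext : PS_hollow A -> PS_hollow B.
Proof.
case=> subA hollowA; split; first exact: is_submodule_ext.
move=> I L idI subL B_IL.
have [A_I | A_L] := hollowA I L idI subL (fun x Ax => B_IL x (AB Ax)).
  by left=> x /BA; apply: A_I.
by right=> x /BA; apply: A_L.
Qed.

End SetInvariance.

Lemma H_PS_hollow_ext (R : comNzRingType) (M : lmodType R)
    (H : (R -> Prop) -> Prop) (A B : M -> Prop) :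
  incl A B -> incl B A -> H_PS_hollow H A -> H_PS_hollow H B.
Proof.
move=> AB BA [hollowA HA]; split; first exact: PS_hollow_ext hollowA.
by move=> I; split=> [/(H_N_ext BA AB)/HA | /HA/(H_N_ext AB BA)].
Qed.

Lemma sub_In (R : comNzRingType) (M : lmodType R) (N : M -> Prop) :
  incl N (In_ N).
Proof. by move=> x Nx I [[_ N_IM] _]; apply: N_IM. Qed.

Theorem lemma5p7 (R : comNzRingType) (M : lmodType R)
    (H : (R -> Prop) -> Prop) (N : M -> Prop) :
  artinian_ring R ->
  (exists m : M, m != 0) ->
  H_PS_hollow H N ->
  (forall L : M -> Prop, is_submodule L -> incl N L -> incl (In_ N) L) ->
  H_PS_hollow H (In_ N).
Proof.
move=> _ _ hollowN In_least.
have subN : is_submodule N by case: hollowN => [[]].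
have In_subN : incl (In_ N) N by apply: In_least.
exact: H_PS_hollow_ext (@sub_In _ _ N) In_subN hollowN.
Qed.
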